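(* For all integers $m,r,n\ge 0$ and all real $x\neq 0$, $$H_{m+r,n}(x)=m!\sum_{k=0}^{m}\frac{(-1)^k}{k!}\,\frac{H_{m-k,n}(x)}{(m-k)!}\,\frac{d^k}{dx^k}\!\left(x^{-n}H_{r,n}(x)\right).$$
   Context: For integers $m,n\ge 0$, the two-index Hermite polynomial is $H_{m,n}(x)=\left(-\frac{d}{dx}+2x\right)^m(x^n)$, i.e. the operator $f\mapsto -f'+2xf$ applied $m$ times to $x^n$. *)

From Stdlib Require Import Reals List.
Import ListNotations.
Open Scope R_scope.

(* Real polynomials as coefficient lists, lowest degree first. *)
Fixpoint peval (p : list R) (x : R) : R :=
  match p with
  | nil => 0
  | a :: q => a + x * peval q x
  end.

Fixpoint padd (p q : list R) : list R :=
  match p, q with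
  | nil, _ => q
  | _, nil => p
  | a :: p', b :: q' => (a + b) :: padd p' q'
  end.

Fixpoint pderiv_aux (k : nat) (p : list R) : list R :=
  match p with
  | nil => nil
  | a :: q => (INR k * a) :: pderiv_aux (S k) q
  end.

Definition pderiv (p : list R) : list R :=
  match p with
  | nil => nil
  | _ :: q => pderiv_aux 1 q
  end.

(* the operator f |-> -f' + 2 x f on polynomials *)
Definition hop (p : list R) : list R :=
  padd (map Ropp (pderiv p)) (0 :: map (Rmult 2) p).

Definition Xn (n : nat) : list R := repeat 0 n ++ [1].

Definition Hpoly (m n : nat) : list R := Nat.iter m hop (Xn n).
Definition H (m n : nat) (x : R) : R := peval (Hpoly m n) x.

(* Write L f = -f' + c f.  For products one has the rule
       L (f g) = (L f) g - f g',
   so L^m (f g) is a binomial expansion: formally, with E1 shifting the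
   "L-index" of f and E2 shifting the derivative index of g,
       L^m (f g) = ((E1 - E2)^m (f_j g_k))|_(j,k)=(0,0)
                 = sum_k C(m,k) (-1)^k (L^(m-k) f) g^(k).
   For c = 2x, f = x^n and f g = H_{r,n} (i.e. g = x^(-n) H_{r,n}), this is
   exactly the theorem, since L^j (x^n) = H_{j,n} and L^m H_{r,n} = H_{m+r,n}. *)

From Stdlib Require Import Reals Lra Lia List.
Open Scope R_scope.

Lemma peval_padd p q x : peval (padd p q) x = peval p x + peval q x.
Proof.
  revert q; induction p as [|a p IH]; intros [|b q]; simpl; try ring.
  rewrite IH; ring.
Qed.

Lemma peval_opp p x : peval (map Ropp p) x = - peval p x.
Proof. induction p as [|a p IH]; simpl; try rewrite IH; ring. Qed.

Lemma peval_scale c p x : peval (map (Rmult c) p) x = c * peval p x.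
Proof. induction p as [|a p IH]; simpl; try rewrite IH; ring. Qed.

Lemma peval_pderiv_aux_S q k x :
  peval (pderiv_aux (S k) q) x = peval (pderiv_aux k q) x + peval q x.
Proof.
  revert k; induction q as [|a q IH]; intro k; cbn [pderiv_aux peval]; [ring|].
  rewrite IH, S_INR; ring.
Qed.

(* Product rule for p = a + x q: p' = q + x q'. *)
Lemma peval_pderiv_cons a q x :
  peval (pderiv (a :: q)) x = peval q x + x * peval (pderiv q) x.
Proof.
  unfold pderiv; rewrite peval_pderiv_aux_S.
  destruct q as [|b q]; simpl; ring.
Qed.

Lemma peval_derivable p x : derivable_pt_lim (peval p) x (peval (pderiv p) x).
Proof.
  induction p as [|a q IH].
  - apply derivable_pt_lim_const.
  - rewrite peval_pderiv_cons.
    replace (peval q x + x * peval (pderiv q) x)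
      with (0 + (1 * peval q x + x * peval (pderiv q) x)) by ring.
    apply (derivable_pt_lim_plus (fun _ => a) (fun y => y * peval q y)).
    + apply derivable_pt_lim_const.
    + apply (derivable_pt_lim_mult id (peval q)); [apply derivable_pt_lim_id | exact IH].
Qed.

Lemma H_0 n x : H 0 n x = x ^ n.
Proof.
  unfold H, Hpoly, Xn; simpl.
  induction n as [|n IH]; simpl; [ring|]. rewrite IH; ring.
Qed.

(* Ladder relation: H_{j+1,n} = -H_{j,n}' + 2x H_{j,n}, read as a derivative. *)
Lemma H_ladder j n x :
  derivable_pt_lim (H j n) x (2 * x * H j n x - H (S j) n x).
Proof.
  replace (2 * x * H j n x - H (S j) n x) with (peval (pderiv (Hpoly j n)) x).
  - apply peval_derivable.
  - unfold H; change (Hpoly (S j) n) with (hop (Hpoly j n)); unfold hop.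
    rewrite peval_padd, peval_opp; simpl; rewrite peval_scale; ring.
Qed.

(* [shift_diff m a] is ((E1 - E2)^m a)(0,0), where E1, E2 shift the first and
   second index of the double sequence a. *)
Fixpoint shift_diff (m : nat) (a : nat -> nat -> R) : R :=
  match m with
  | O => a O O
  | S p => shift_diff p (fun j k => a (S j) k) - shift_diff p (fun j k => a j (S k))
  end.

Lemma shift_diff_ext m a b :
  (forall j k, a j k = b j k) -> shift_diff m a = shift_diff m b.
Proof.
  revert a b; induction m as [|m IH]; intros a b Eab; simpl; [apply Eab|].
  f_equal; apply IH; intros; apply Eab.
Qed.

Lemma shift_diff_linear m p q a b :
  shift_diff m (fun j k => p * a j k + q * b j k) = p * shift_diff m a + q * shift_diff m b.
Proof.
  revert a b; induction m as [|m IH]; intros a b; simpl; [ring|].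
  rewrite !IH; ring.
Qed.

Lemma shift_diff_derivable m (A : nat -> nat -> R -> R) (A' : nat -> nat -> R) y :
  (forall j k, derivable_pt_lim (A j k) y (A' j k)) ->
  derivable_pt_lim (fun z => shift_diff m (fun j k => A j k z)) y (shift_diff m A').
Proof.
  revert A A'; induction m as [|m IH]; intros A A' HA; simpl; [apply HA|].
  apply (derivable_pt_lim_minus (fun z => shift_diff m (fun j k => A (S j) k z))
           (fun z => shift_diff m (fun j k => A j (S k) z)));
    [apply (IH (fun j k => A (S j) k)) | apply (IH (fun j k => A j (S k)))];
    intros; apply HA.
Qed.

Fixpoint binom (m k : nat) : R :=
  match m, k with
  | O, O => 1
  | O, S _ => 0
  | S _, O => 1
  | S p, S q => binom p q + binom p (S q)
  end.

Lemma binom_above m k : (m < k)%nat -> binom m k = 0.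
Proof.
  revert k; induction m as [|m IH]; intros [|k] Hk; simpl; try lia; auto.
  rewrite !IH by lia; ring.
Qed.

Lemma C_diag n : C n n = 1.
Proof. unfold C; rewrite Nat.sub_diag; simpl; field; apply INR_fact_neq_0. Qed.

Lemma C_zero n : C n 0 = 1.
Proof. unfold C; rewrite Nat.sub_0_r; simpl; field; apply INR_fact_neq_0. Qed.

Lemma binom_C m k : (k <= m)%nat -> binom m k = C m k.
Proof.
  revert k; induction m as [|m IH]; intros [|k] Hk; simpl;
    try (rewrite C_zero; reflexivity); try lia.
  destruct (Nat.eq_dec k m) as [->|Hne].
  - rewrite (binom_above m (S m)), IH, !C_diag by lia; ring.
  - rewrite !IH by lia; apply pascal; lia.
Qed.

Lemma sum_peel_first (b : nat -> R) m :
  b (S m) = 0 -> sum_f_R0 b m = b O + sum_f_R0 (fun i => b (S i)) m.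
Proof.
  intro Hlast; destruct m as [|m]; [simpl in *; lra|].
  rewrite (decomp_sum b (S m)) by lia; simpl; lra.
Qed.

Lemma shift_diff_binomial m a :
  shift_diff m a = sum_f_R0 (fun k => binom m k * (-1) ^ k * a (m - k)%nat k) m.
Proof.
  revert a; induction m as [|m IH]; intro a; [simpl; ring|].
  change (shift_diff (S m) a)
    with (shift_diff m (fun j k => a (S j) k) - shift_diff m (fun j k => a j (S k))).
  rewrite !IH.
  (* the E1-part supplies the term k = 0 and the upper Pascal summands *)
  assert (E1 : sum_f_R0 (fun k => binom m k * (-1) ^ k * a (S (m - k)) k) m
               = a (S m) O + sum_f_R0 (fun i => binom m (S i) * (-1) ^ S i * a (m - i)%nat (S i)) m).
  { rewrite (sum_eq _ (fun k => binom m k * (-1) ^ k * a (S m - k)%nat k))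
      by (intros i Hi; do 3 f_equal; lia).
    rewrite sum_peel_first by (rewrite binom_above by lia; ring).
    rewrite binom_C, C_zero by lia; simpl; ring. }
  (* the terms of degree S m split by Pascal's rule *)
  assert (E2 : sum_f_R0 (fun i => binom (S m) (S i) * (-1) ^ S i * a (S m - S i)%nat (S i)) m
               = sum_f_R0 (fun i => binom m (S i) * (-1) ^ S i * a (m - i)%nat (S i)) m
                 - sum_f_R0 (fun i => binom m i * (-1) ^ i * a (m - i)%nat (S i)) m).
  { rewrite <- minus_sum; apply sum_eq; intros; simpl; ring. }
  rewrite (decomp_sum _ (S m)) by lia; simpl pred.
  rewrite E1, E2; simpl; ring.
Qed.

(* Let c be a coefficient function and call u a ladder
   if u_i' = c u_i - u_{i+1}, i.e. u_{i+1} = L u_i with L f = -f' + c f. *)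
Section TwistedLeibniz.

Variables (U : R -> Prop) (c : R -> R) (u v g : nat -> R -> R).
Hypothesis U_open : open_set U.
Hypothesis u_ladder : forall i y, U y -> derivable_pt_lim (u i) y (c y * u i y - u (S i) y).
Hypothesis v_ladder : forall j y, derivable_pt_lim (v j) y (c y * v j y - v (S j) y).
Hypothesis g_chain : forall k y, U y -> derivable_pt_lim (g k) y (g (S k) y).
Hypothesis u_v_g_0 : forall y, U y -> u O y = v O y * g O y.

(* One step: L (v_j g_k) = v_{j+1} g_k - v_j g_{k+1}. *)
Lemma twisted_product_step m y :
  c y * shift_diff m (fun j k => v j y * g k y)
  - shift_diff m (fun j k => (c y * v j y - v (S j) y) * g k y + v j y * g (S k) y)
  = shift_diff (S m) (fun j k => v j y * g k y).
Proof.
  rewrite (shift_diff_ext m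
             (fun j k => (c y * v j y - v (S j) y) * g k y + v j y * g (S k) y)
             (fun j k => c y * (v j y * g k y)
                         + (-1) * (v (S j) y * g k y - v j y * g (S k) y)))
    by (intros; ring).
  rewrite shift_diff_linear.
  rewrite (shift_diff_ext m (fun j k => v (S j) y * g k y - v j y * g (S k) y)
             (fun j k => 1 * (v (S j) y * g k y) + (-1) * (v j y * g (S k) y)))
    by (intros; ring).
  rewrite shift_diff_linear; simpl; ring.
Qed.

Lemma twisted_leibniz m y :
  U y -> u m y = shift_diff m (fun j k => v j y * g k y).
Proof.
  revert y; induction m as [|m IH]; intros y Uy; [simpl; auto|].
  destruct (U_open y Uy) as [delta Hdelta].
  (* near y, u_m is the expansion, which differentiates termwise *)
  assert (Du : derivable_pt_lim (u m) y
    (shift_diff m (fun j k => (c y * v j y - v (S j) y) * g k y + v j y * g (S k) y))).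
  { apply (derivable_pt_lim_locally_ext
             (fun z => shift_diff m (fun j k => v j z * g k z)) _ y (y - delta) (y + delta)).
    - pose proof (cond_pos delta); lra.
    - intros z Hz; symmetry; apply IH, Hdelta; unfold disc.
      apply Rabs_def1; lra.
    - apply (shift_diff_derivable m (fun j k z => v j z * g k z)); intros j k.
      apply derivable_pt_lim_mult; [apply v_ladder | apply g_chain; exact Uy]. }
  pose proof (uniqueness_limite _ _ _ _ (u_ladder m y Uy) Du) as Eu.
  rewrite <- twisted_product_step, <- Eu, IH by exact Uy; ring.
Qed.

End TwistedLeibniz.

Lemma open_set_nonzero : open_set (fun y => y <> 0).
Proof.
  intros y Hy. exists (mkposreal _ (Rabs_pos_lt y Hy)); simpl.
  intros z Hz ->; unfold disc in Hz; simpl in Hz.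
  rewrite Rminus_0_l, Rabs_Ropp in Hz; lra.
Qed.

Theorem mainTheorem16 (m r n : nat) (x : R) (hx : x <> 0)
  (g : nat -> R -> R)
  (hg0 : forall y, y <> 0 -> g 0%nat y = / (y ^ n) * H r n y)
  (hgS : forall (k : nat) (y : R), y <> 0 -> derivable_pt_lim (g k) y (g (S k) y)) :
  H (m + r) n x =
  INR (Factorial.fact m) *
  sum_f_R0 (fun k => (-1) ^ k / INR (Factorial.fact k) * (H (m - k) n x / INR (Factorial.fact (m - k))) * g k x) m.
Proof.
  (* the ladders u_i = H_{i+r,n} and v_j = H_{j,n} = L^j (x^n), with c = 2x *)
  assert (Hr : forall y, y <> 0 -> H (0 + r) n y = H 0 n y * g O y).
  { intros y Hy; rewrite hg0, H_0 by exact Hy; simpl.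
    field; apply pow_nonzero, Hy. }
  rewrite (twisted_leibniz (fun y => y <> 0) (fun y => 2 * y)
             (fun i => H (i + r) n) (fun j => H j n) g open_set_nonzero
             (fun i y _ => H_ladder (i + r) n y) (fun j y => H_ladder j n y) hgS Hr m x hx).
  rewrite shift_diff_binomial, scal_sum.
  apply sum_eq; intros k Hk.
  rewrite binom_C by exact Hk; unfold C.
  field; split; apply INR_fact_neq_0.
Qed.
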